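(* Let $F_1,F_2$ be bijections of $\mathbb F_2^m$ with $F_1(0)=F_2(0)=0$ such that the self-embeddings $S\cup F_1(S)$ and $S\cup F_2(S)$ are isomorphic, where $S=STS(\mathcal H^n)$. Then $F_1$ and $F_2$ are CCZ-equivalent.
   Context: $n=2^m-1$; identify $\mathbb F_2^m$ with $GF(2^m)$. $S=STS(\mathcal H^n)$ is the set of 3-subsets $\{a,b,c\}$ of nonzero elements with $a+b+c=0$; $F(S)=\{\{F(a),F(b),F(c)\}:\{a,b,c\}\in S\}$. Self-embeddings $S\cup F_1(S)$, $S\cup F_2(S)$ are isomorphic if there is a permutation $\sigma$ of the nonzero elements with either $\sigma(S)=S,\sigma(F_1(S))=F_2(S)$ or $\sigma(S)=F_2(S),\sigma(F_1(S))=S$. $\mathcal C_F$ is the binary linear code of length $n$ with parity-check matrix whose columns are $\binom{x}{F(x)}$ for nonzero $x\in\mathbb F_2^m$; $\mathcal C_F^*$ is its extension by an overall parity-check bit. $F_1,F_2$ are called CCZ-equivalent if $\mathcal C^*_{F_1}$ and $\mathcal C^*_{F_2}$ are equivalent codes (one obtained from the other by a coordinate permutation). *)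

From HB Require Import structures.
From mathcomp Require Import all_boot all_order all_algebra.
From mathcomp Require Import perm.
Set Implicit Arguments. Unset Strict Implicit. Unset Printing Implicit Defensive.
Import GRing.Theory.
Local Open Scope ring_scope.


(* Nonzero elements of F_2^m: the n = 2^m - 1 points / code coordinates. *)
Definition NZ (m : nat) : finType := {x : 'rV['F_2]_m | x != 0}.

Definition STS (m : nat) : {set {set 'rV['F_2]_m}} :=
  [set B : {set 'rV['F_2]_m} |
     [&& #|B| == 3, (0 : 'rV['F_2]_m) \notin B & \sum_(x in B) x == 0]].

Definition blocks_img (m : nat) (F : 'rV['F_2]_m -> 'rV['F_2]_m)
    (S : {set {set 'rV['F_2]_m}}) : {set {set 'rV['F_2]_m}} :=
  (fun B : {set 'rV['F_2]_m} => F @: B) @: S.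

(* Isomorphism of the self-embeddings S u F1(S) and S u F2(S):
   a permutation sigma of the nonzero elements (i.e. a permutation of
   F_2^m fixing 0) with sigma(S) = S, sigma(F1 S) = F2 S, or
   sigma(S) = F2 S, sigma(F1 S) = S. *)
Definition self_emb_iso (m : nat) (F1 F2 : 'rV['F_2]_m -> 'rV['F_2]_m) : Prop :=
  exists sigma : {perm 'rV['F_2]_m}, sigma 0 = 0 /\
   ((blocks_img sigma (STS m) = STS m /\
     blocks_img sigma (blocks_img F1 (STS m)) = blocks_img F2 (STS m)) \/
    (blocks_img sigma (STS m) = blocks_img F2 (STS m) /\
     blocks_img sigma (blocks_img F1 (STS m)) = STS m)).

(* C_F: binary linear code with coordinates indexed by nonzero x, and
   parity-check matrix with columns (x ; F x). A word c is in C_F iff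
   sum_x c_x x = 0 and sum_x c_x F(x) = 0. *)
Definition code_CF (m : nat) (F : 'rV['F_2]_m -> 'rV['F_2]_m) :
    {set {ffun NZ m -> 'F_2}} :=
  [set c : {ffun NZ m -> 'F_2} |
     (\sum_(x : NZ m) c x *: val x == 0) &&
     (\sum_(x : NZ m) c x *: F (val x) == 0)].

(* C_F^*: extension by an overall parity-check bit; the extra coordinate
   is None. *)
Definition code_CF_ext (m : nat) (F : 'rV['F_2]_m -> 'rV['F_2]_m) :
    {set {ffun option (NZ m) -> 'F_2}} :=
  [set c : {ffun option (NZ m) -> 'F_2} |
     ([ffun x : NZ m => c (Some x)] \in code_CF F) &&
     (\sum_(i : option (NZ m)) c i == 0)].

Definition equiv_codes (I : finType) (C1 C2 : {set {ffun I -> 'F_2}}) : Prop :=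
  exists pi : {perm I},
    C2 = (fun c : {ffun I -> 'F_2} => [ffun i => c (pi i)]) @: C1.

Definition CCZ_equiv (m : nat) (F1 F2 : 'rV['F_2]_m -> 'rV['F_2]_m) : Prop :=
  equiv_codes (code_CF_ext F1) (code_CF_ext F2).

From HB Require Import structures.
From mathcomp Require Import all_boot all_order all_algebra.
From mathcomp Require Import perm.
Import GRing.Theory.
Local Open Scope ring_scope.
Set Implicit Arguments.
Unset Strict Implicit.

(* Let sigma realise the isomorphism and write F2^-1 for the inverse of F2.
   The key fact (STS_preserving_additive) is that an injective map of F_2^m
   fixing 0 and sending Steiner triples {a, b, a+b} to Steiner triples is
   additive, since its images f a, f b, f (a+b) again sum to 0.  Each of the
   two cases of the isomorphism provides two such maps A, B with
     t x = A (u x)  and  F2 (t x) = B (v x),   t := F2^-1 o sigma o F1,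
   where (u, v) = (id, F1) or (F1, id): in the first case A = t, B = sigma,
   in the second A = F2^-1 o sigma, B = sigma o F1.  Additive injective maps
   preserve the vanishing of F_2-linear combinations, so the coordinate
   permutation induced by t on the nonzero points (extended by fixing the
   parity bit) maps the extended code C*_F1 onto C*_F2. *)

Definition lincomb (V : lmodType 'F_2) (I : finType) (c : I -> 'F_2)
    (u : I -> V) : V :=
  \sum_i c i *: u i.

Section CharacteristicTwo.

Lemma F2_cases (c : 'F_2) : c = 0 \/ c = 1.
Proof. by case: c => [[|[|n]] Hn]; [left|right|]; try apply/val_inj. Qed.

Variable V : lmodType 'F_2.

Lemma addvv (x : V) : x + x = 0.
Proof.
have two0 : (2%:R : 'F_2) = 0 by apply/val_inj.
by rewrite -mulr2n -scaler_nat two0 scale0r.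
Qed.

Lemma oppv (x : V) : - x = x.
Proof. by rewrite -[LHS]add0r -(addvv x) addrK. Qed.

Lemma eq_lincomb (I : finType) (c : I -> 'F_2) (u v : I -> V) :
  u =1 v -> lincomb c u = lincomb c v.
Proof. by move=> uv; apply: eq_bigr => i _; rewrite uv. Qed.

Variable W : lmodType 'F_2.
Variable f : V -> W.
Hypothesis f_add : {morph f : a b / a + b}.

Lemma additive_0 : f 0 = 0.
Proof. by apply: (@addrI _ (f 0)); rewrite -f_add !addr0. Qed.

(* Over F_2 an additive map is linear, hence commutes with linear combinations. *)
Lemma additive_lincomb (I : finType) (c : I -> 'F_2) (u : I -> V) :
  f (lincomb c u) = lincomb c (f \o u).
Proof.
rewrite /lincomb (big_morph f f_add additive_0); apply: eq_bigr => i _.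
by case: (F2_cases (c i)) => ->; rewrite ?scale0r ?additive_0 ?scale1r.
Qed.

Lemma lincomb_eq0_transport (I : finType) (c : I -> 'F_2) (u : I -> V) :
  injective f -> (lincomb c (f \o u) == 0) = (lincomb c u == 0).
Proof.
by move=> f_inj; rewrite -additive_lincomb -{1}additive_0 (inj_eq f_inj).
Qed.

End CharacteristicTwo.

Section SteinerTriples.

Variable m : nat.
Implicit Types (f g : 'rV['F_2]_m -> 'rV['F_2]_m) (S : {set {set 'rV['F_2]_m}}).

Lemma blocks_img_comp f g S :
  blocks_img (g \o f) S = blocks_img g (blocks_img f S).
Proof.
rewrite /blocks_img -imset_comp; apply: eq_imset => B /=.
by rewrite imset_comp.
Qed.

Lemma blocks_img_can f g S : cancel f g -> blocks_img g (blocks_img f S) = S.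
Proof.
move=> fK; have gf_id : (fun B : {set 'rV['F_2]_m} => (g \o f) @: B) =1 id.
  by move=> B; rewrite /= (eq_imset _ fK) imset_id.
by rewrite -blocks_img_comp /blocks_img (eq_imset _ gf_id) imset_id.
Qed.

Lemma STS_triple (a b c : 'rV['F_2]_m) :
  a \notin b |: [set c] -> b != c -> 0 \notin a |: (b |: [set c]) ->
  (a |: (b |: [set c]) \in STS m) = (a + (b + c) == 0).
Proof.
move=> a_bc bc nz.
by rewrite inE cardsU1 a_bc cardsU1 inE bc cards1 nz big_setU1 //= big_setU1
  ?inE //= big_set1.
Qed.

(* Key lemma: an injection fixing 0 that sends Steiner triples to Steiner
   triples is additive, as f a + f b + f (a + b) = 0 for every triple
   {a, b, a + b}. *)
Lemma STS_preserving_additive f :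
  injective f -> f 0 = 0 -> blocks_img f (STS m) \subset STS m ->
  {morph f : a b / a + b}.
Proof.
move=> f_inj f0 fS a b.
have [->|a0] := eqVneq a 0; first by rewrite add0r f0 add0r.
have [->|b0] := eqVneq b 0; first by rewrite addr0 f0 addr0.
have [<-|ab] := eqVneq a b; first by rewrite !addvv f0.
have ab_a : a + b != a by rewrite -subr_eq0 addrAC subrr add0r.
have ab_b : b != a + b by rewrite eq_sym -subr_eq0 -addrA subrr addr0.
have ab0 : a + b != 0 by rewrite -[b]oppv subr_eq0.
have a_bc : a \notin b |: [set a + b] by rewrite !inE negb_or ab eq_sym ab_a.
have nz : 0 \notin a |: (b |: [set a + b]).
  by rewrite !inE !negb_or !(eq_sym 0) a0 b0.
have T : a |: (b |: [set a + b]) \in STS m by rewrite STS_triple // addrA addvv.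
have /(subsetP fS) := imset_f (fun B : {set 'rV['F_2]_m} => f @: B) T.
rewrite !imsetU1 imset_set1 STS_triple ?(inj_eq f_inj) //.
- by rewrite addrA => /eqP h; rewrite -[f (a + b)]oppv -[LHS]add0r -h addrK.
- by rewrite !inE !(inj_eq f_inj); rewrite !inE in a_bc.
- by rewrite -f0 !inE !(inj_eq f_inj); rewrite !inE in nz.
Qed.

End SteinerTriples.

Section Codes.

Variable m : nat.
Implicit Types (f : 'rV['F_2]_m -> 'rV['F_2]_m).

Lemma nonzero_image f (f_inj : injective f) (f0 : f 0 = 0) (x : NZ m) :
  f (val x) != 0.
Proof. by rewrite -[X in _ != X]f0 (inj_eq f_inj) (valP x). Qed.

Definition restrictNZ f (f_inj : injective f) (f0 : f 0 = 0) (x : NZ m) : NZ m :=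
  exist (fun y => y != 0) (f (val x)) (nonzero_image f_inj f0 x).

Lemma restrictNZ_inj f (f_inj : injective f) (f0 : f 0 = 0) :
  injective (restrictNZ f_inj f0).
Proof. by move=> x y /(congr1 val) /f_inj /val_inj. Qed.

Lemma equiv_codes_of_perm (I : finType) (C1 C2 : {set {ffun I -> 'F_2}})
    (pi : {perm I}) :
  (forall c, (c \in C1) = ([ffun i => c (pi i)] \in C2)) -> equiv_codes C1 C2.
Proof.
move=> piC; exists pi; apply/setP => d; apply/idP/imsetP => [dC2|[c cC1 ->]].
- have d_pi : [ffun i => [ffun j => d ((pi^-1)%g j)] (pi i)] = d.
    by apply/ffunP => i; rewrite !ffunE permK.
  by exists [ffun j => d ((pi^-1)%g j)]; rewrite ?piC d_pi.
- by rewrite -piC.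
Qed.

(* If a permutation h of the nonzero points carries the linear relations
   among the columns (x; F1 x) exactly onto those among the columns
   (h x; F2 (h x)), then F1 and F2 are CCZ-equivalent: permute the
   coordinates of C*_F1 by h and leave the parity bit in place. *)
Lemma CCZ_equiv_of_perm (F1 F2 : 'rV['F_2]_m -> 'rV['F_2]_m) (h : NZ m -> NZ m) :
  injective h ->
  (forall c : NZ m -> 'F_2,
     (lincomb c val == 0) && (lincomb c (F1 \o val) == 0) =
     (lincomb c (val \o h) == 0) && (lincomb c (F2 \o (val \o h)) == 0)) ->
  CCZ_equiv F1 F2.
Proof.
move=> h_inj hC; pose hp := perm h_inj.
have lift_inj : injective (omap (hp^-1)%g) by case=> [x|] [y|] //= [] /perm_inj ->.
apply: (equiv_codes_of_perm (pi := perm lift_inj)) => c; rewrite !inE.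
have -> : \sum_i [ffun i => c (perm lift_inj i)] i = \sum_i c i.
  rewrite (reindex_inj (@perm_inj _ (perm lift_inj)^-1)%g) /=.
  by apply: eq_bigr => i _; rewrite ffunE permKV.
congr andb.
have sum_Some (u : NZ m -> 'rV['F_2]_m) :
    \sum_x [ffun x => c (Some x)] x *: u x = \sum_x c (Some x) *: u x.
  by apply: eq_bigr => x _; rewrite ffunE.
have sum_pi (u : NZ m -> 'rV['F_2]_m) :
    \sum_x [ffun x => [ffun i => c (perm lift_inj i)] (Some x)] x *: u x =
    \sum_x c (Some x) *: u (h x).
  rewrite (reindex_inj (@perm_inj _ hp)); apply: eq_bigr => x _.
  by rewrite !ffunE permE /= permK permE.
by rewrite !sum_Some !sum_pi; apply: hC.
Qed.

End Codes.

Unset Implicit Arguments.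

Theorem mainTheorem12 (m : nat) (F1 F2 : 'rV['F_2]_m -> 'rV['F_2]_m) :
  bijective F1 -> bijective F2 -> F1 0 = 0 -> F2 0 = 0 ->
  self_emb_iso F1 F2 -> CCZ_equiv F1 F2.
Proof.
move=> /bij_inj F1_inj [g2 F2K g2K] F10 F20 [s [s0 s_iso]].
have s_inj : injective s := @perm_inj _ s.
have g2_inj : injective g2 := can_inj g2K.
have g20 : g2 0 = 0 by rewrite -F20 F2K.
(* The coordinate permutation is induced by t = F2^-1 o s o F1; note that
   F2 o t = s o F1. *)
pose t := g2 \o s \o F1.
have t_inj : injective t by do 2 apply: inj_comp.
have t0 : t 0 = 0 by rewrite /t /= F10 s0 g20.
have F2t : F2 \o (val \o restrictNZ t_inj t0) =1 s \o (F1 \o val).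
  by move=> x; rewrite /= g2K.
apply: (CCZ_equiv_of_perm (@restrictNZ_inj _ _ t_inj t0)) => c.
have val_t : val \o restrictNZ t_inj t0 =1 t \o val by [].
rewrite (eq_lincomb c F2t) (eq_lincomb c val_t).
case: s_iso => [[sS sF]|[sS sF]].
- (* s fixes STS, and t maps STS to F2^-1 (s (F1 STS)) = STS. *)
  have t_add : {morph t : a b / a + b}.
    apply: STS_preserving_additive => //.
    rewrite /t (blocks_img_comp F1 (g2 \o s)) (blocks_img_comp s g2) sF.
    by rewrite blocks_img_can.
  have s_add : {morph s : a b / a + b}.
    by apply: STS_preserving_additive => //; rewrite sS.
  by rewrite (lincomb_eq0_transport t_add c val t_inj)
    (lincomb_eq0_transport s_add c (F1 \o val) s_inj).
- (* F2^-1 o s maps STS to F2^-1 (F2 STS) = STS, and s o F1 maps STS to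
     s (F1 STS) = STS; the two checks of C_F1 are swapped. *)
  have A_inj : injective (g2 \o s) by apply: inj_comp.
  have A_add : {morph g2 \o s : a b / a + b}.
    apply: STS_preserving_additive; rewrite /= ?s0 //.
    by rewrite (blocks_img_comp s g2) sS blocks_img_can.
  have B_inj : injective (s \o F1) by apply: inj_comp.
  have B_add : {morph s \o F1 : a b / a + b}.
    apply: STS_preserving_additive; rewrite /= ?F10 //.
    by rewrite (blocks_img_comp F1 s) sF.
  by rewrite (lincomb_eq0_transport A_add c (F1 \o val) A_inj)
    (lincomb_eq0_transport B_add c val B_inj) andbC.
Qed.
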